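(* Let $f$ be a permutation of $\mathbb{F}_q$, extended to a permutation of $\mathbb{P}^1(\mathbb{F}_q)$ fixing $\infty$, and let $k\ge1$. If $$f=\mu(x)\circ x^{q-2}\circ(x-a_k)\circ x^{q-2}\circ(x-a_{k-1})\circ\cdots\circ x^{q-2}\circ(x-a_1)$$ with $a_1,\dots,a_k\in\mathbb{F}_q$ and $\mu\in\mathbb{F}_q(x)$ of degree one, then $\mu$ is a degree-one polynomial in $\mathbb{F}_q[x]$. Consequently the set of all such representations of $f$ (tuples $(\mu;a_1,\dots,a_k)$ with $\mu\in\mathbb{F}_q[x]$ of degree one) is in bijection with the set of all representations $f=\nu(x)\circ(b_1,\infty)\circ\cdots\circ(b_k,\infty)$ with $b_1,\dots,b_k\in\mathbb{F}_q$ and $\nu\in\mathbb{F}_q(x)$ of degree one.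
   Context: Let $q>2$ be a prime power, $\mathbb{F}_q$ the field with $q$ elements, $\mathbb{P}^1(\mathbb{F}_q)=\mathbb{F}_q\cup\{\infty\}$. Degree-one rational functions in $\mathbb{F}_q(x)$ act on $\mathbb{P}^1(\mathbb{F}_q)$ with the usual conventions. $x^{q-2}$ acts on $\mathbb{P}^1(\mathbb{F}_q)$ by fixing $0$ and $\infty$ and sending $c\in\mathbb{F}_q^*$ to $c^{-1}$. For $b\in\mathbb{F}_q$, $(b,\infty)$ is the transposition of $\mathbb{P}^1(\mathbb{F}_q)$ swapping $b$ and $\infty$. Composition is $(f\circ g)(x)=f(g(x))$, and equalities are of permutations of $\mathbb{P}^1(\mathbb{F}_q)$. *)

From HB Require Import structures.
From mathcomp Require Import all_boot all_order all_algebra all_fingroup all_field.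
From mathcomp Require Import fraction.
Set Implicit Arguments. Unset Strict Implicit. Unset Printing Implicit Defensive.
Import GRing.Theory.
Local Open Scope ring_scope.

Notation tofrac := (@FracField.tofrac _).

Section Defs.
Variable F : fieldType.

(* P^1(F) = F u {oo}, with None standing for oo *)
Definition P1 := option F.

Definition ratfun (a b c d : F) : {fraction {poly F}} :=
  (tofrac (a%:P * 'X + b%:P) / tofrac (c%:P * 'X + d%:P)).

(* its action on P^1(F), usual conventions (assuming a d - b c <> 0) *)
Definition mob_act (a b c d : F) (P : P1) : P1 :=
  match P with
  | Some x => if c * x + d == 0 then None else Some ((a * x + b) / (c * x + d))
  | None => if c == 0 then None else Some (a / c)
  end.

Definition acts (mu : {fraction {poly F}}) (sigma : P1 -> P1) : Prop :=
  exists a b c d : F, a * d - b * c != 0 /\ mu = ratfun a b c d /\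
     forall P, sigma P = mob_act a b c d P.

Definition is_deg1_poly (mu : {fraction {poly F}}) : Prop :=
  exists p : {poly F}, size p = 2%N /\ mu = tofrac p.

(* x^(q-2): fixes 0 and oo, c |-> c^-1 on F^* *)
Definition inv_act (P : P1) : P1 := omap (fun x => x^-1) P.
Definition shift_act (a : F) (P : P1) : P1 := omap (fun x => x - a) P.
Definition transp_act (b : F) (P : P1) : P1 :=
  match P with
  | None => Some b
  | Some x => if x == b then None else Some x
  end.

(* x^(q-2) o (x - a_k) o ... o x^(q-2) o (x - a_1), with s = [a_1; ...; a_k] *)
Definition chainA (s : seq F) (P : P1) : P1 :=
  foldl (fun Q a => inv_act (shift_act a Q)) P s.
(* (b_1, oo) o ... o (b_k, oo), with s = [b_1; ...; b_k] *)
Definition chainB (s : seq F) (P : P1) : P1 :=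
  foldr (fun b Q => transp_act b Q) P s.

Definition ext (f : F -> F) (P : P1) : P1 := omap f P.

Definition repA (f : F -> F) (mu : {fraction {poly F}}) (s : seq F) : Prop :=
  exists sigma, acts mu sigma /\ forall P, ext f P = sigma (chainA s P).
Definition repB (f : F -> F) (nu : {fraction {poly F}}) (s : seq F) : Prop :=
  exists sigma, acts nu sigma /\ forall P, ext f P = sigma (chainB s P).

End Defs.

From HB Require Import structures.
From mathcomp Require Import all_boot all_order all_algebra all_fingroup all_field.
From mathcomp Require Import fraction ring.
From Stdlib Require Import ProofIrrelevance ClassicalEpsilon.
Import GRing.Theory.
Local Open Scope ring_scope.

(* A degree-one rational function (a x + b)/(c x + d) acts on P^1(F) through
   its matrix on homogeneous coordinates; hence actions compose like matrix
   products, the adjugate acts as the inverse, and a function is determined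
   by its action (a transformation fixing 0, 1, oo has a scalar matrix).
   - First assertion: x^(q-2) and x - a fix oo, and so does the extension of
     f, so mu fixes oo; a Moebius transformation fixing oo has c = 0, i.e. mu
     is a degree-one polynomial.
   - Bijection: on F the chain of inversions and translations is a bijection
     g_s, and x^(q-2) o (x - a) = 1/(x - a) o (a, oo).  Conjugating (a, oo)
     past g_s turns it into (g_s^-1(a), oo); by induction the chain with
     points a_1..a_k equals a Moebius transformation composed with the chain
     of transpositions at b_i = g_(a_1..a_(i-1))^-1(a_i).  The map a |-> b is
     invertible, and mu (resp. nu) is determined by the tuple, so
     (mu; a) |-> (nu; b) is a bijection of the representation sets. *)

Section Mobius.
Context {F : fieldType}.

Definition proj (u v : F) : P1 F := if v == 0 then None else Some (u / v).

Definition coords (P : P1 F) : F * F := if P is Some x then (x, 1) else (1, 0).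

Lemma coordsK (P : P1 F) : proj (coords P).1 (coords P).2 = P.
Proof. by case: P => [x|]; rewrite /proj /= ?oner_eq0 ?divr1 ?eqxx. Qed.

Lemma coords_neq0 (P : P1 F) : ((coords P).1 != 0) || ((coords P).2 != 0).
Proof. by case: P => [x|] /=; rewrite oner_eq0 ?orbT. Qed.

Lemma mob_act_proj (a b c d u v : F) : (u != 0) || (v != 0) ->
  mob_act a b c d (proj u v) = proj (a * u + b * v) (c * u + d * v).
Proof.
rewrite /proj; case: (eqVneq v 0) => [-> | v0 _] /=.
  rewrite orbF => u0; rewrite !mulr0 !addr0 mulf_eq0 (negbTE u0) orbF.
  by case: eqP => // /eqP c0; congr Some; field; rewrite c0 u0.
have E : c * u + d * v = (c * (u / v) + d) * v by field.
rewrite E mulf_eq0 (negbTE v0) orbF; case: eqP => // /eqP cd0.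
by congr Some; field; rewrite v0 E mulf_neq0.
Qed.

Lemma det_neq0_coords (a b c d u v : F) : a * d - b * c != 0 ->
  (u != 0) || (v != 0) -> (a * u + b * v != 0) || (c * u + d * v != 0).
Proof.
move=> det; apply: contraTT; rewrite negb_or !negbK => /andP[/eqP h1 /eqP h2].
have eu : (a * d - b * c) * u = d * (a * u + b * v) - b * (c * u + d * v) by ring.
have ev : (a * d - b * c) * v = a * (c * u + d * v) - c * (a * u + b * v) by ring.
move: eu ev; rewrite h1 h2 !mulr0 subr0 => /eqP + /eqP.
by rewrite !mulf_eq0 (negbTE det) /= => -> ->.
Qed.

Lemma mob_act_comp (a b c d a' b' c' d' : F) (P : P1 F) : a' * d' - b' * c' != 0 ->
  mob_act a b c d (mob_act a' b' c' d' P) =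
  mob_act (a * a' + b * c') (a * b' + b * d') (c * a' + d * c') (c * b' + d * d') P.
Proof.
move=> det'; rewrite -[P]coordsK; case: (coords P) (coords_neq0 P) => u v /= uv.
by rewrite !mob_act_proj ?det_neq0_coords //; congr proj; ring.
Qed.

Lemma mob_act_scalar (l : F) (P : P1 F) : l != 0 -> mob_act l 0 0 l P = P.
Proof.
move=> l0; case: P => [x|]; rewrite /mob_act ?eqxx //.
by rewrite mul0r add0r (negbTE l0) addr0 mulrC mulKf.
Qed.

Lemma mob_act_adjK (a b c d : F) (P : P1 F) : a * d - b * c != 0 ->
  mob_act d (- b) (- c) a (mob_act a b c d P) = P.
Proof.
move=> det; rewrite mob_act_comp //.
have -> : d * b + - b * d = 0 by ring.
have -> : - c * a + a * c = 0 by ring.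
have -> : d * a + - b * c = a * d - b * c by ring.
have -> : - c * b + a * d = a * d - b * c by ring.
exact: mob_act_scalar.
Qed.

Lemma mob_act_idP (e f g h : F) : (forall P : P1 F, mob_act e f g h P = P) ->
  [/\ f = 0, g = 0 & e = h].
Proof.
move=> idP; have g0 : g = 0 by move: (idP None); rewrite /mob_act; case: eqP.
move: (idP (Some 0)) (idP (Some 1)); rewrite /mob_act g0 !mul0r !add0r mulr0 add0r.
case: eqP => // h0 [] /eqP; rewrite mulf_eq0 invr_eq0 (negbTE (introN eqP h0)) orbF.
move=> /eqP f0; rewrite f0 addr0 mulr1 => [[]] eh.
by split => //; rewrite -(divfK (introN eqP h0) e) eh mul1r.
Qed.

Lemma linear_poly_neq0 (c d : F) : (c != 0) || (d != 0) -> c%:P * 'X + d%:P != 0.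
Proof.
apply: contraTneq => cd0; rewrite negb_or !negbK.
have := congr1 (fun p : {poly F} => p`_0) cd0.
have := congr1 (fun p : {poly F} => p`_1) cd0.
rewrite /= !coefD !coefCM !coefX !coefC /= mulr1 mulr0 addr0 add0r.
by move=> -> ->; rewrite eqxx.
Qed.

Lemma linear_polyM (a b c d : F) : (a%:P * 'X + b%:P) * (c%:P * 'X + d%:P) =
  (a * c)%:P * 'X^2 + (a * d + b * c)%:P * 'X + (b * d)%:P :> {poly F}.
Proof. rewrite !polyCD !polyCM; ring. Qed.

Lemma ratfun_cross (a b c d a' b' c' d' : F) :
  (c != 0) || (d != 0) -> (c' != 0) || (d' != 0) ->
  a * c' = a' * c -> b * d' = b' * d -> a * d' + b * c' = a' * d + b' * c ->
  ratfun a b c d = ratfun a' b' c' d'.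
Proof.
move=> cd c'd' E1 E2 E3; apply/eqP.
rewrite /ratfun eqr_div ?tofrac_eq0 ?linear_poly_neq0 //.
by rewrite -!rmorphM /= !linear_polyM E1 E2 E3.
Qed.

Lemma det_neq0_denom (a b c d : F) : a * d - b * c != 0 -> (c != 0) || (d != 0).
Proof.
apply: contraTT; rewrite negb_or !negbK => /andP[/eqP -> /eqP ->].
by rewrite !mulr0 subrr.
Qed.

Lemma acts_unique (mu mu' : {fraction {poly F}}) (s s' : P1 F -> P1 F) :
  acts mu s -> acts mu' s' -> s =1 s' -> mu = mu'.
Proof.
move=> [a [b [c [d [det [-> Hs]]]]]] [a' [b' [c' [d' [det' [-> Hs']]]]]] ss'.
have [f0 g0 eh] : [/\ d' * b + - b' * d = 0, - c' * a + a' * c = 0 &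
                     d' * a + - b' * c = - c' * b + a' * d].
  by apply: mob_act_idP => P; rewrite -mob_act_comp // -Hs ss' Hs' mob_act_adjK.
apply: ratfun_cross; [exact: det_neq0_denom det | exact: det_neq0_denom det' | | |].
- by rewrite -[LHS]addr0 -g0; ring.
- by rewrite -[LHS]subr0 -f0; ring.
- by rewrite -[LHS]subr0 -(subrr (d' * a + - b' * c)) {2}eh; ring.
Qed.

Definition mobius (sigma : P1 F -> P1 F) : Prop := exists mu, acts mu sigma.

Lemma mobius_mob_act (a b c d : F) :
  a * d - b * c != 0 -> mobius (mob_act a b c d).
Proof. by move=> det; exists (ratfun a b c d), a, b, c, d. Qed.

Lemma eq_mobius (sigma tau : P1 F -> P1 F) :
  sigma =1 tau -> mobius tau -> mobius sigma.
Proof.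
by move=> st [_ [a [b [c [d [det [_ Ht]]]]]]]; exists (ratfun a b c d), a, b, c, d;
  split => //; split => // P; rewrite st Ht.
Qed.

Lemma mobius_id : mobius (@id (P1 F)).
Proof.
apply: (eq_mobius _ (mob_act 1 0 0 1)) => [P|].
  by rewrite mob_act_scalar ?oner_neq0.
by apply: mobius_mob_act; rewrite mulr1 mulr0 subr0 oner_neq0.
Qed.

Lemma mobius_comp {sigma tau : P1 F -> P1 F} :
  mobius sigma -> mobius tau -> mobius (sigma \o tau).
Proof.
move=> [_ [a [b [c [d [det [_ Hs]]]]]]] [_ [a' [b' [c' [d' [det' [_ Ht]]]]]]].
apply: (eq_mobius _ (mob_act (a * a' + b * c') (a * b' + b * d')
                              (c * a' + d * c') (c * b' + d * d'))).
  by move=> P; rewrite /= Hs Ht mob_act_comp.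
apply: mobius_mob_act.
have -> : (a * a' + b * c') * (c * b' + d * d') - (a * b' + b * d') * (c * a' + d * c')
  = (a * d - b * c) * (a' * d' - b' * c') by ring.
exact: mulf_neq0.
Qed.

Lemma mobius_inv {tau : P1 F -> P1 F} :
  mobius tau -> exists2 tau', mobius tau' & forall P, tau' (tau P) = P.
Proof.
move=> [_ [a [b [c [d [det [_ Ht]]]]]]]; exists (mob_act d (- b) (- c) a).
  by apply: mobius_mob_act; rewrite mulrNN mulrC.
by move=> P; rewrite Ht mob_act_adjK.
Qed.

End Mobius.

Section Chains.
Context {F : fieldType}.

Definition chainF (s : seq F) (x : F) : F := foldl (fun y a => (y - a)^-1) x s.
Definition chainFinv (s : seq F) (y : F) : F := foldr (fun a y => y^-1 + a) y s.

Lemma chainA_omap (s : seq F) (P : P1 F) : chainA s P = omap (chainF s) P.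
Proof. by elim: s P => [|a s IH] [x|] //=; rewrite IH. Qed.

Lemma chainFK (s : seq F) : cancel (chainF s) (chainFinv s).
Proof. by elim: s => [|a s IH] x //=; rewrite IH invrK subrK. Qed.

Lemma chainFinvK (s : seq F) : cancel (chainFinv s) (chainF s).
Proof. by elim: s => [|a s IH] y //=; rewrite addrK invrK IH. Qed.

Lemma chainA_surj (s : seq F) (Q : P1 F) : exists P, chainA s P = Q.
Proof.
exists (omap (chainFinv s) Q); rewrite chainA_omap.
by case: Q => //= y; rewrite chainFinvK.
Qed.

Lemma inv_shift_transp (a : F) (Q : P1 F) :
  inv_act (shift_act a Q) = mob_act 0 1 1 (- a) (transp_act a Q).
Proof.
case: Q => [x|] /=; last by rewrite /mob_act mul1r subrr eqxx.
case: eqP => [->|/eqP xa]; first by rewrite subrr invr0 /mob_act oner_eq0 mul0r.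
by rewrite /mob_act mul1r subr_eq0 (negbTE xa) mul0r add0r div1r.
Qed.

Lemma transp_act_omap (g : F -> F) (b : F) (P : P1 F) : injective g ->
  transp_act (g b) (omap g P) = omap g (transp_act b P).
Proof. by move=> g_inj; case: P => [x|] //=; rewrite inj_eq //; case: eqP. Qed.

Lemma transp_actK (b : F) : involutive (transp_act b).
Proof.
case=> [x|] /=; last by rewrite eqxx.
by case: eqP => [->|/eqP xb] /=; rewrite ?eqxx ?(negbTE xb).
Qed.

Lemma chainB_rcons (s : seq F) (b : F) (P : P1 F) :
  chainB (rcons s b) P = chainB s (transp_act b P).
Proof. by rewrite /chainB foldr_rcons. Qed.

Lemma chainB_surj (s : seq F) (Q : P1 F) : exists P, chainB s P = Q.
Proof.
elim: s Q => [|b s IH] Q; first by exists Q.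
by have [P HP] := IH (transp_act b Q); exists P; rewrite /= HP transp_actK.
Qed.

(* The points b_i = chainFinv [:: a_1; ...; a_(i-1)] a_i of the transposition
   representation; transp_seq_from pre s treats s as following the prefix pre. *)
Fixpoint transp_seq_from (pre s : seq F) : seq F :=
  if s is a :: s' then chainFinv pre a :: transp_seq_from (rcons pre a) s'
  else [::].
Fixpoint shift_seq_from (pre t : seq F) : seq F :=
  if t is b :: t' then chainF pre b :: shift_seq_from (rcons pre (chainF pre b)) t'
  else [::].

Definition transp_seq (s : seq F) : seq F := transp_seq_from [::] s.
Definition shift_seq (t : seq F) : seq F := shift_seq_from [::] t.

Lemma size_transp_seq (s : seq F) : size (transp_seq s) = size s.
Proof. by rewrite /transp_seq; elim: s [::] => [|a s IH] pre //=; rewrite IH. Qed.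

Lemma size_shift_seq (t : seq F) : size (shift_seq t) = size t.
Proof. by rewrite /shift_seq; elim: t [::] => [|b t IH] pre //=; rewrite IH. Qed.

Lemma transp_seqK : cancel transp_seq shift_seq.
Proof.
rewrite /transp_seq /shift_seq => s; elim: s [::] => [|a s IH] pre //=.
by rewrite chainFinvK IH.
Qed.

Lemma shift_seqK : cancel shift_seq transp_seq.
Proof.
rewrite /transp_seq /shift_seq => t; elim: t [::] => [|b t IH] pre //=.
by rewrite chainFK IH.
Qed.

Lemma transp_seq_rcons (s : seq F) (a : F) :
  transp_seq (rcons s a) = rcons (transp_seq s) (chainFinv s a).
Proof.
rewrite /transp_seq -[s in chainFinv s]cat0s.
by elim: s [::] => [|x s IH] pre /=; rewrite ?cats0 // IH cat_rcons.
Qed.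

Lemma chainA_chainB (s : seq F) : exists2 tau, mobius tau &
  forall P, chainA s P = tau (chainB (transp_seq s) P).
Proof.
elim/last_ind: s => [|s a [tau tau_mob Htau]].
  by exists id; first exact: mobius_id.
exists (mob_act 0 1 1 (- a) \o tau).
  apply: mobius_comp tau_mob; apply: mobius_mob_act.
  by rewrite mul0r mul1r sub0r oppr_eq0 oner_neq0.
move=> P; have ab : a = chainF s (chainFinv s a) by rewrite chainFinvK.
rewrite /chainA foldl_rcons -/(chainA s P) inv_shift_transp /=.
rewrite transp_seq_rcons chainB_rcons -Htau !chainA_omap [X in transp_act X _]ab.
by rewrite transp_act_omap //; apply: can_inj (chainFK s).
Qed.

End Chains.

Section Representations.
Context {F : fieldType}.

Lemma acts_fix_oo_deg1 (mu : {fraction {poly F}}) (sigma : P1 F -> P1 F) :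
  acts mu sigma -> sigma None = None -> is_deg1_poly mu.
Proof.
move=> [a [b [c [d [det [-> Hs]]]]]]; rewrite Hs /mob_act.
case: eqP => // c0 _; move: det; rewrite c0 mulr0 subr0 mulf_eq0 negb_or.
move=> /andP[a0 d0]; exists ((a / d)%:P * 'X + (b / d)%:P); split.
  by rewrite size_MXaddC polyC_eq0 mulf_eq0 invr_eq0 (negbTE a0) (negbTE d0)
             size_polyC mulf_neq0 ?invr_neq0.
rewrite (@ratfun_cross _ a b 0 d (a / d) (b / d) 0 1) ?oner_neq0 ?d0 ?orbT //.
- by rewrite /ratfun polyC0 mul0r add0r polyC1 rmorph1 divr1.
- by rewrite !mulr0.
- by rewrite mulr1 divfK.
- by rewrite !mulr0 !addr0 mulr1 divfK.
Qed.

Variable f : F -> F.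

Lemma repA_deg1 (mu : {fraction {poly F}}) (s : seq F) :
  repA f mu s -> is_deg1_poly mu.
Proof.
move=> [sigma [Hmu Hf]]; apply: acts_fix_oo_deg1 Hmu _.
by move: (Hf None); rewrite chainA_omap /= => <-.
Qed.

(* In either kind of representation the rational function is determined by
   the points, since both chains are onto P^1(F). *)
Lemma repA_unique (mu mu' : {fraction {poly F}}) (s : seq F) :
  repA f mu s -> repA f mu' s -> mu = mu'.
Proof.
move=> [sigma [Hmu Hf]] [sigma' [Hmu' Hf']]; apply: acts_unique Hmu Hmu' _ => Q.
by have [P <-] := chainA_surj s Q; rewrite -Hf -Hf'.
Qed.

Lemma repB_unique (nu nu' : {fraction {poly F}}) (t : seq F) :
  repB f nu t -> repB f nu' t -> nu = nu'.
Proof.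
move=> [sigma [Hnu Hf]] [sigma' [Hnu' Hf']]; apply: acts_unique Hnu Hnu' _ => Q.
by have [P <-] := chainB_surj t Q; rewrite -Hf -Hf'.
Qed.

Lemma repA_repB (mu : {fraction {poly F}}) (s : seq F) :
  repA f mu s -> exists nu, repB f nu (transp_seq s).
Proof.
move=> [sigma [Hmu Hf]]; have [tau tau_mob Htau] := chainA_chainB s.
have [nu Hnu] : mobius (sigma \o tau) by apply: mobius_comp => //; exists mu.
by exists nu, (sigma \o tau); split => // P; rewrite Hf Htau.
Qed.

Lemma repB_repA (nu : {fraction {poly F}}) (t : seq F) :
  repB f nu t -> exists mu, repA f mu (shift_seq t).
Proof.
move=> [sigma [Hnu Hf]]; have [tau tau_mob Htau] := chainA_chainB (shift_seq t).
have [tau' tau'_mob tauK] := mobius_inv tau_mob.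
have [mu Hmu] : mobius (sigma \o tau') by apply: mobius_comp => //; exists nu.
by exists mu, (sigma \o tau'); split => // P; rewrite Hf Htau shift_seqK /= tauK.
Qed.

End Representations.

(* Transport a pair (x, t) with PA x t to some (y, phi t) with PB y (phi t). *)
Definition lift_pair {X Y T U : Type} {PA : X -> T -> Prop} {PB : Y -> U -> Prop}
    {phi : T -> U} (ex : forall x t, PA x t -> exists y, PB y (phi t))
    (p : {p : X * T | PA p.1 p.2}) : {q : Y * U | PB q.1 q.2} :=
  let w := constructive_indefinite_description _ (ex _ _ (proj2_sig p)) in
  exist (fun q => PB q.1 q.2) (proj1_sig w, phi (proj1_sig p).2) (proj2_sig w).

Lemma lift_pairK {X Y T U : Type} {PA : X -> T -> Prop} {PB : Y -> U -> Prop}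
    (phi : T -> U) (psi : U -> T) (phiK : cancel phi psi)
    (PA_unique : forall x x' t, PA x t -> PA x' t -> x = x')
    (ex : forall x t, PA x t -> exists y, PB y (phi t))
    (ex' : forall y u, PB y u -> exists x, PA x (psi u)) :
  cancel (lift_pair ex) (lift_pair ex').
Proof.
case=> [[x t] H]; rewrite /lift_pair /=.
case: constructive_indefinite_description => x' Hx' /=.
have Hx : PA x' t by rewrite -(phiK t).
by apply: subset_eq_compat; rewrite phiK (PA_unique _ _ _ Hx H).
Qed.

Section Tuples.
Context {F : fieldType} {k : nat}.

Lemma transp_seq_tupleP (s : k.-tuple F) : size (transp_seq s) == k.
Proof. by rewrite size_transp_seq size_tuple. Qed.
Canonical transp_seq_tuple (s : k.-tuple F) : k.-tuple F :=
  Tuple (transp_seq_tupleP s).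

Lemma shift_seq_tupleP (t : k.-tuple F) : size (shift_seq t) == k.
Proof. by rewrite size_shift_seq size_tuple. Qed.
Canonical shift_seq_tuple (t : k.-tuple F) : k.-tuple F :=
  Tuple (shift_seq_tupleP t).

Lemma transp_seq_tupleK : cancel transp_seq_tuple shift_seq_tuple.
Proof. by move=> s; apply: val_inj; rewrite /= transp_seqK. Qed.

Lemma shift_seq_tupleK : cancel shift_seq_tuple transp_seq_tuple.
Proof. by move=> t; apply: val_inj; rewrite /= shift_seqK. Qed.

End Tuples.

Theorem corollary4p1 (F : finFieldType) (hq : (2 < #|F|)%N) (f : {perm F})
    (k : nat) (hk : (0 < k)%N) :
  (forall (mu : {fraction {poly F}}) (a : k.-tuple F),
      repA f mu a -> is_deg1_poly mu) /\
  exists g : {x : {fraction {poly F}} * k.-tuple F |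
                is_deg1_poly x.1 /\ repA f x.1 x.2} ->
             {y : {fraction {poly F}} * k.-tuple F | repB f y.1 y.2},
    bijective g.
Proof.
split; first by move=> mu a; apply: repA_deg1.
pose PA mu (a : k.-tuple F) := is_deg1_poly mu /\ repA f mu a.
pose PB nu (b : k.-tuple F) := repB f nu b.
have PA_unique mu mu' a : PA mu a -> PA mu' a -> mu = mu'.
  by move=> [_ H] [_ H']; apply: repA_unique H H'.
have PB_unique nu nu' b : PB nu b -> PB nu' b -> nu = nu'.
  exact: repB_unique.
have AB mu a : PA mu a -> exists nu, PB nu (transp_seq_tuple a).
  by move=> [_ /repA_repB].
have BA nu b : PB nu b -> exists mu, PA mu (shift_seq_tuple b).
  by move=> /repB_repA [mu H]; exists mu; split; first exact: repA_deg1 H.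
exists (lift_pair AB); exists (lift_pair BA).
- exact: lift_pairK transp_seq_tupleK PA_unique AB BA.
- exact: lift_pairK shift_seq_tupleK PB_unique BA AB.
Qed.
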